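(* Let $\Gamma$ be a numerical semigroup with multiplicity $e$ and conductor $c$, let $r>0$ be an integer and $m\in\Gamma$. Let $S_r(m)=\{(m_1,\dots,m_r)\in\Gamma^r: m\le m_1<\cdots<m_r\}$. Set $u=\max\{m+e-1,c+e-1\}$ and define finite sets $F_k(m)\subseteq S_k(m)$ recursively by $F_1(m)=\{m,m+1,\dots,u\}\cap\Gamma$ and, for $k\ge2$, \[ F_k(m)=\{(m_1,\dots,m_k): (m_1,\dots,m_{k-1})\in F_{k-1}(m),\ m_k\in X(m;m_1,\dots,m_{k-1})\}, \] where \[ X(m;m_1,\dots,m_{k-1})=\Big(\big(\{m_{k-1}+1,\dots,u\}\cap\Gamma\big)\cup\{m_1+e,\dots,m_{k-1}+e\}\Big)\setminus\{0,1,\dots,m_{k-1}\}. \] Then \[ \min\{|D_\Gamma(x_1,\dots,x_r)| : (x_1,\dots,x_r)\in F_r(m)\}=\min\{|D_\Gamma(p_1,\dots,p_r)|:(p_1,\dots,p_r)\in S_r(m)\}. \] In particular the right-hand side, which is the $r$-th Feng-Rao distance $\delta^r_\Gamma(m)$, is a minimum over a finite, recursively constructible set.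
   Context: A numerical semigroup is a subset $\Gamma\subseteq\mathbb N$ containing $0$, closed under addition, with finite complement; multiplicity = least positive element; conductor = least $c$ with $c+\mathbb N\subseteq\Gamma$. For $x\in\mathbb Z$, $D_\Gamma(x)=\{s\in\Gamma:x-s\in\Gamma\}$ and $D_\Gamma(x_1,\dots,x_r)=D_\Gamma(x_1)\cup\cdots\cup D_\Gamma(x_r)$. The $r$-th Feng-Rao distance is $\delta^r_\Gamma(m)=\min\{|D_\Gamma(m_1,\dots,m_r)|: m\le m_1<\cdots<m_r,\ m_i\in\Gamma\}$. *)

From mathcomp Require Import all_boot.
Set Implicit Arguments. Unset Strict Implicit. Unset Printing Implicit Defensive.

Definition numerical_semigroup (G : nat -> bool) : Prop :=
  G 0 /\ (forall x y, G x -> G y -> G (x + y)) /\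
  (exists N, forall n, N <= n -> G n).

Definition is_multiplicity (G : nat -> bool) (e : nat) : Prop :=
  0 < e /\ G e /\ (forall x, 0 < x -> G x -> e <= x).

Definition is_conductor (G : nat -> bool) (c : nat) : Prop :=
  (forall n, c <= n -> G n) /\
  (forall c', (forall n, c' <= n -> G n) -> c <= c').

(* D_Gamma(x) = { s in Gamma : x - s in Gamma } (for x in N; s <= x forced) *)
Definition Dset (G : nat -> bool) (x : nat) : seq nat :=
  [seq s <- iota 0 x.+1 | G s && G (x - s)].

Definition Dcard (G : nat -> bool) (xs : seq nat) : nat :=
  size (undup (flatten (map (Dset G) xs))).

Definition inS (G : nat -> bool) (r m : nat) (p : seq nat) : Prop :=
  [/\ size p = r, all G p, sorted ltn p & m <= head 0 p].

Definition ubound (m e c : nat) : nat := maxn (m + e - 1) (c + e - 1).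

Definition F1 (G : nat -> bool) (e c m : nat) : seq (seq nat) :=
  [seq [:: x] | x <- iota m (ubound m e c - m).+1 & G x].

Definition Xset (G : nat -> bool) (e c m : nat) (t : seq nat) : seq nat :=
  let l := last 0 t in
  let u := ubound m e c in
  [seq y <- undup ([seq y <- iota l.+1 (u - l) | G y] ++ [seq y + e | y <- t])
     | l < y].

(* F_k(m) for k >= 1 (F_0 is unused and set to the empty list) *)
Fixpoint Fset (G : nat -> bool) (e c m k : nat) : seq (seq nat) :=
  match k with
  | 0 => [::]
  | k'.+1 =>
      match k' with
      | 0 => F1 G e c m
      | _.+1 => flatten [seq [seq rcons t y | y <- Xset G e c m t]
                        | t <- Fset G e c m k']
      end
  end.

Definition is_FR_distance (G : nat -> bool) (r m d : nat) : Prop :=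
  (exists p, inS G r m p /\ Dcard G p = d) /\
  (forall p, inS G r m p -> d <= Dcard G p).

From mathcomp Require Import all_boot zify.
Set Implicit Arguments. Unset Strict Implicit. Unset Printing Implicit Defensive.

(* If a tuple of S_r(m) has an entry x > u with x - e not among its entries,
   replace x by x - e: since x - e >= m and x - e >= c, the result is again in
   S_r(m) after sorting, and since e is in Gamma, D(x - e) is contained in D(x),
   so |D| does not grow, while the sum of the entries drops.  Hence every tuple
   of S_r(m) is dominated by one whose entries are each <= u or e above another
   entry, and these are exactly the tuples of F_r(m). *)

Section FengRaoReduction.
Variables (G : nat -> bool) (e c m : nat).

Definition Dunion (X : seq nat) : seq nat := flatten [seq Dset G x | x <- X].

Lemma Dcard_subset X Y :
  {subset Dunion X <= Dunion Y} -> Dcard G X <= Dcard G Y.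
Proof.
move=> subXY; apply: uniq_leq_size; first exact: undup_uniq.
by move=> z; rewrite !mem_undup; apply: subXY.
Qed.

Lemma mem_Dset y s : (s \in Dset G y) = [&& s <= y, G s & G (y - s)].
Proof. by rewrite mem_filter mem_iota ltnS andbC. Qed.

Lemma FsetSS k : Fset G e c m k.+2 =
  flatten [seq [seq rcons t y | y <- Xset G e c m t] | t <- Fset G e c m k.+1].
Proof. by []. Qed.

Lemma inS_rcons k t y :
  inS G k.+2 m (rcons t y) <-> inS G k.+1 m t /\ G y && (last 0 t < y).
Proof.
case: t => [|a t]; first by split=> [[]|[[]]]; rewrite ?size_rcons.
rewrite /inS /= size_rcons all_rcons rcons_path.
split=> [[[sz] /and3P[Ga Gy Gt] /andP[st lty] ma]|].
  by rewrite sz Ga Gt Gy; split; [split | apply: lty].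
move=> [[[sz] /andP[Ga Gt] st ma] /andP[Gy lty]].
by rewrite sz Ga Gy Gt st; split=> //; apply: lty.
Qed.

Hypothesis G_add : forall x y, G x -> G y -> G (x + y).

Lemma Dset_subset_add y s : G s -> {subset Dset G y <= Dset G (y + s)}.
Proof.
move=> Gs z; rewrite !mem_Dset => /and3P[zy Gz Gyz].
by rewrite Gz (leq_trans zy (leq_addr _ _)) -addnBAC // G_add.
Qed.

Hypothesis e_pos : 0 < e.
Hypothesis G_e : G e.
Hypothesis conductor_le : forall n, c <= n -> G n.

Local Notation u := (ubound m e c).

Definition reduced (X : seq nat) : bool :=
  all (fun x => (x <= u) || (x - e \in X)) X.

Lemma perm_reduced X Y : perm_eq X Y -> reduced X = reduced Y.
Proof.
move=> pXY; rewrite /reduced (perm_all _ pXY).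
by apply: eq_all => x; rewrite (perm_mem pXY).
Qed.

(* The unordered counterpart of S_k(m); tuples are only sorted at the end. *)
Definition admissible (X : seq nat) : bool := [&& uniq X, all G X & all (leq m) X].

Lemma reduce_step X : admissible X -> ~~ reduced X ->
  exists X', [/\ admissible X', size X' = size X, sumn X' < sumn X
                 & {subset Dunion X' <= Dunion X}].
Proof.
case/and3P=> uX GX mX /allPn[x xX]; rewrite negb_or -ltnNge => /andP[ux xeX].
have [mex cex] : m + e <= x /\ c + e <= x by move: ux; rewrite /ubound; lia.
have pX := perm_to_rem xX.
exists (x - e :: rem x X); split.
- move: GX mX; rewrite /admissible /= (perm_all _ pX) (perm_all _ pX) /=.
  move=> /andP[_ ->] /andP[_ ->]; rewrite rem_uniq // conductor_le; last lia.
  by rewrite (contra (@mem_rem _ _ _ _) xeX) /=; lia.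
- by rewrite (perm_size pX).
- by rewrite (perm_sumn pX) /=; lia.
move=> z; rewrite /Dunion /= mem_cat => /orP[zx|zX]; apply/flatten_mapP.
  by exists x => //; rewrite -(subnK (leq_trans (leq_addl c e) cex)) Dset_subset_add.
by case/flatten_mapP: zX => w /mem_rem wX zw; exists w.
Qed.

Lemma exists_reduced X : admissible X ->
  exists Y, [/\ admissible Y, reduced Y, size Y = size X
                & {subset Dunion Y <= Dunion X}].
Proof.
have [n] := ubnP (sumn X); elim: n X => [|n IHn] X // ltXn admX.
have [redX|/(reduce_step admX)[X' [admX' sizeX' ltX' subX']]] := boolP (reduced X).
  by exists X; split.
have [Y [admY redY sizeY subY]] := IHn X' (leq_trans ltX' ltXn) admX'.
by exists Y; split=> //; [rewrite sizeY | move=> z /subY /subX'].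
Qed.

Lemma mem_Xset t y : all G t ->
  (y \in Xset G e c m t) = [&& last 0 t < y, G y & (y <= u) || (y - e \in t)].
Proof.
move=> Gt; rewrite /Xset mem_filter mem_undup mem_cat mem_filter mem_iota.
have mem_shift : (y \in [seq z + e | z <- t]) = (e <= y) && (y - e \in t).
  apply/mapP/andP => [[z zt ->]|[ey yet]]; first by rewrite leq_addl addnK.
  by exists (y - e); rewrite ?subnK.
rewrite mem_shift; case: (ltnP (last 0 t) y) => //= lty.
case: (leqP y u) => yu /=.
  rewrite (_ : y < _) ?andbT; last lia.
  apply/orP/idP => [[//|/andP[ey yet]]|]; last by left.
  by rewrite -(subnK ey) G_add // (allP Gt).
have [ey Gy] : e <= y /\ G y.
  by split; [|apply: conductor_le]; move: yu; rewrite /ubound; lia.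
by rewrite (_ : y < _ = false) ?ey ?Gy //; lia.
Qed.

Lemma reduced_rcons t y : sorted ltn (rcons t y) ->
  reduced (rcons t y) = reduced t && ((y <= u) || (y - e \in t)).
Proof.
rewrite sorted_pairwise; last exact: ltn_trans.
rewrite pairwise_rcons => /andP[lt_t_y _].
rewrite /reduced all_rcons mem_rcons in_cons andbC; congr andb.
  apply: eq_in_all => z zt; rewrite mem_rcons in_cons.
  by have := allP lt_t_y z zt; case: eqP => //=; lia.
by case: (leqP y u) => //= uy; case: eqP => //=; lia.
Qed.

Lemma mem_Fset k X : X \in Fset G e c m k.+1 <-> inS G k.+1 m X /\ reduced X.
Proof.
elim: k X => [|k IHk] X.
  have mu : m <= u by rewrite /ubound; lia.
  have single_inj : injective (fun x : nat => [:: x]) by move=> a b [].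
  case: X => [|x [|x' X]]; try by split=> [/mapP[? _ //]|[[]]].
  rewrite /= /F1 (mem_map single_inj).
  rewrite mem_filter mem_iota /inS /reduced /= !andbT in_cons orbF.
  split=> [/andP[Gx /andP[mx xu]]|[[_ Gx _ mx] /orP[xu|/eqP xex]]].
  - by split; [split | rewrite (_ : x <= u) //; lia].
  - by rewrite Gx mx /=; lia.
  - by rewrite Gx mx /=; move: xex; rewrite /ubound; lia.
rewrite FsetSS; split.
  case/flatten_mapP=> t /IHk[tS tred] /mapP[y yX ->].
  have [_ Gt _ _] := tS.
  move: yX; rewrite mem_Xset // => /and3P[lty Gy yred].
  have rS : inS G k.+2 m (rcons t y) by apply/inS_rcons; rewrite Gy lty.
  by split=> //; rewrite reduced_rcons ?tred //; case: rS.
case/lastP: X => [[[]]//|t y] [rS].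
have [_ _ sorted_ty _] := rS.
rewrite reduced_rcons // => /andP[tred yred].
case/inS_rcons: rS => tS /andP[Gy lty].
apply/flatten_mapP; exists t; first exact/IHk.
by apply: map_f; rewrite mem_Xset ?Gy ?lty //; case: tS.
Qed.

Lemma inS_admissible k p : inS G k m p -> admissible p.
Proof.
case=> _ Gp sp mp; rewrite /admissible Gp (sorted_uniq ltn_trans ltnn) //.
case: p sp mp {Gp} => //= a t sorted_at ma; rewrite ma /=.
by apply: sub_all (order_path_min ltn_trans sorted_at) => z /ltnW; apply: leq_trans.
Qed.

Lemma sort_inS Y : admissible Y -> 0 < size Y -> inS G (size Y) m (sort leq Y).
Proof.
case/and3P=> uY GY mY Y_gt0; split.
- by rewrite size_sort.
- by rewrite (perm_all _ (permEl (perm_sort _ _))).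
- by rewrite ltn_sorted_uniq_leq sort_uniq uY (sort_sorted leq_total).
have : head 0 (sort leq Y) \in sort leq Y.
  by case: (sort leq Y) (size_sort leq Y) Y_gt0 => [<-|a s _ _]; rewrite ?mem_head.
by rewrite mem_sort; apply: (allP mY).
Qed.

Lemma Fset_dominates k p : inS G k.+1 m p ->
  exists2 x, x \in Fset G e c m k.+1 & Dcard G x <= Dcard G p.
Proof.
move=> pS; have [Y [admY redY sizeY subY]] := exists_reduced (inS_admissible pS).
have size_p : size Y = k.+1 by case: pS; rewrite sizeY.
exists (sort leq Y).
  apply/mem_Fset; split; first by rewrite -size_p; apply: sort_inS; rewrite ?size_p.
  by rewrite (perm_reduced (permEl (perm_sort _ _))).
apply: Dcard_subset => z /flatten_mapP[w]; rewrite mem_sort => wY zw.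
by apply: subY; apply/flatten_mapP; exists w.
Qed.

Lemma inS_progression r : G m -> inS G r.+1 m [seq m + i * e | i <- iota 0 r.+1].
Proof.
move=> Gm; split.
- by rewrite size_map size_iota.
- apply/allP=> _ /mapP[i _ ->].
  by elim: i => [|i IHi]; rewrite ?addn0 // mulSnr addnA G_add.
- rewrite sorted_map; apply: sub_sorted (iota_ltn_sorted 0 r.+1) => i j /= ij.
  by rewrite ltn_add2l ltn_mul2r e_pos.
- exact: leq_addr.
Qed.

End FengRaoReduction.

Theorem proposition6p1 (G : nat -> bool) (e c r m : nat) :
  numerical_semigroup G -> is_multiplicity G e -> is_conductor G c ->
  0 < r -> G m ->
  exists x, x \in Fset G e c m r /\
    (forall y, y \in Fset G e c m r -> Dcard G x <= Dcard G y) /\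
    is_FR_distance G r m (Dcard G x).
Proof.
move=> [_ [G_add _]] [e_pos [G_e _]] [conductor_le _] r_gt0 Gm.
case: r r_gt0 => // r _.
have dominated p := @Fset_dominates G e c m G_add e_pos G_e conductor_le r p.
have [x0 x0F _] := dominated _ (inS_progression G_add e_pos G_e r Gm).
have exD : exists n, has (fun x => Dcard G x == n) (Fset G e c m r.+1).
  by exists (Dcard G x0); apply/hasP; exists x0.
have [_ /hasP[x xF /eqP <-] x_min] := ex_minnP exD.
have Fmin y : y \in Fset G e c m r.+1 -> Dcard G x <= Dcard G y.
  by move=> yF; apply: x_min; apply/hasP; exists y.
exists x; split=> //; split=> //; split.
  by exists x; split=> //; case/mem_Fset: xF.
by move=> p /dominated[y /Fmin]; apply: leq_trans.
Qed.
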